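(* Let $f:(0,\infty)\to(0,\infty)$ be continuous, let $F(x)=\int_x^1\frac{du}{f(u)}$ for $x>0$, and suppose $\lim_{x\to0^+}F(x)=+\infty$, so that the inverse $F^{-1}$ of the strictly decreasing function $F$ is defined on $[0,\infty)$ and $F^{-1}(t)\to0$ as $t\to\infty$. If $f\circ F^{-1}\in\mathrm{RV}_\infty(-1)$, then $F^{-1}\in\mathrm{RV}_\infty(0)$.
   Context: $\mathrm{RV}_\infty(\alpha)$: the class of measurable functions $h$, positive for large arguments, with $\lim_{t\to\infty}h(\lambda t)/h(t)=\lambda^\alpha$ for every $\lambda>0$. *)

From Stdlib Require Import Reals.
Open Scope R_scope.

Definition lim_infty (g : R -> R) (l : R) : Prop :=
  forall eps, 0 < eps -> exists M, forall t, M < t -> Rabs (g t - l) < eps.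

Definition RV_infty (alpha : R) (h : R -> R) : Prop :=
  (exists x0, forall x, x0 < x -> 0 < h x) /\
  (forall lam, 0 < lam ->
     lim_infty (fun t => h (lam * t) / h t) (Rpower lam alpha)).

From Stdlib Require Import Reals Lra Classical ClassicalEpsilon.
Open Scope R_scope.

(* Write G = Finv and h = f o G.  Since F' = -1/f, we have
   G' = -h, and the statement becomes: a positive decreasing G whose rate of
   decrease h is continuous, positive and in RV(-1) is slowly varying.

   1. (Baire) The pointwise limits h(u s)/h(s) -> 1/u hold uniformly for u in
      some interval [a, b] with 1 <= a < b, up to the factors 1/4 and 2.
   2. Integrating G' = -h over [a s, b s] then gives
        c s h(s) <= G(s) - G(b s)   and   G(a s) - G(b s) <= C s h(s).
   3. Summing the lower bound over the blocks [b^j t, b^(j+1) t] and using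
      h in RV(-1) shows t h(t) = o(G t); the upper bound then gives
      G(t) - G(mu t) = o(G t) for mu = b/a > 1.
   4. For a positive decreasing G, one such mu > 1 suffices for G in RV(0). *)

Definition eventually (P : R -> Prop) : Prop :=
  exists T, forall t, T < t -> P t.

Lemma eventually_and (P Q : R -> Prop) :
  eventually P -> eventually Q -> eventually (fun t => P t /\ Q t).
Proof.
  intros [T1 H1] [T2 H2]. exists (Rmax T1 T2). intros t Ht.
  pose proof (Rmax_l T1 T2). pose proof (Rmax_r T1 T2).
  split; [apply H1 | apply H2]; lra.
Qed.

Lemma eventually_mono (P Q : R -> Prop) :
  (forall t, P t -> Q t) -> eventually P -> eventually Q.
Proof. intros PQ [T HT]. exists T. auto. Qed.

Lemma eventually_gt (c : R) : eventually (fun t => c < t).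
Proof. exists c. auto. Qed.

Lemma eventually_dilate (lam : R) (P : R -> Prop) :
  0 < lam -> eventually P -> eventually (fun t => P (lam * t)).
Proof.
  intros Hlam [T HT]. exists (T / lam). intros t Ht. apply HT.
  apply (Rmult_lt_compat_l lam) in Ht; [|lra].
  replace (lam * (T / lam)) with T in Ht by (field; lra). exact Ht.
Qed.

Lemma nested_intervals (a b : nat -> R) :
  (forall n, a n <= b n) ->
  (forall n, a n <= a (S n) /\ b (S n) <= b n) ->
  exists c, forall n, a n <= c <= b n.
Proof.
  intros Hab Hnest.
  assert (Hmono : forall n m, (n <= m)%nat -> a n <= a m /\ b m <= b n).
  { intros n m Hnm. induction Hnm as [|m _ IH]; [lra|].
    destruct (Hnest m). lra. }
  assert (Hcross : forall k n, a k <= b n).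
  { intros k n.
    destruct (Hmono k (max k n) (Nat.le_max_l _ _)).
    destruct (Hmono n (max k n) (Nat.le_max_r _ _)).
    specialize (Hab (max k n)). lra. }
  destruct (completeness (fun x => exists k, x = a k)) as [c [Hub Hlub]].
  - exists (b O). intros x [k ->]. apply Hcross.
  - exists (a O). eauto.
  - exists c. intro n. split.
    + apply Hub. eauto.
    + apply Hlub. intros x [k ->]. apply Hcross.
Qed.

Lemma avoid_subinterval (P : R -> Prop) (a b : R) :
  a < b ->
  (forall u, a <= u <= b -> ~ P u ->
     exists r, 0 < r /\ forall v, Rabs (v - u) < r -> ~ P v) ->
  ~ (forall u, a <= u <= b -> P u) ->
  exists a' b', a <= a' < b' /\ b' <= b /\ forall v, a' <= v <= b' -> ~ P v.
Proof.
  intros Hab Hopen Hnot.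
  destruct (not_all_ex_not _ _ Hnot) as [u Hu].
  destruct (imply_to_and _ _ Hu) as [Hu1 Hu2].
  destruct (Hopen u Hu1 Hu2) as [r [Hr Hball]].
  exists (Rmax a (u - r / 2)), (Rmin b (u + r / 2)).
  split; [|split].
  - unfold Rmax, Rmin; repeat destruct Rle_dec; lra.
  - apply Rmin_l.
  - intros v Hv. apply Hball.
    unfold Rmax, Rmin in Hv; repeat destruct Rle_dec in Hv; apply Rabs_def1; lra.
Qed.

Lemma baire_interval (c d : R) (P : nat -> R -> Prop) :
  c < d ->
  (forall u, c <= u <= d -> exists n, P n u) ->
  (forall n u, c <= u <= d -> ~ P n u ->
     exists r, 0 < r /\ forall v, Rabs (v - u) < r -> ~ P n v) ->
  exists n a b, c <= a < b /\ b <= d /\ forall u, a <= u <= b -> P n u.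
Proof.
  intros Hcd Hcover Hopen. apply NNPP. intro Hno.
  pose (good (p : R * R) := c <= fst p < snd p /\ snd p <= d).
  assert (Hstep : forall n (p : R * R), {q : R * R | good p ->
     good q /\ fst p <= fst q /\ snd q <= snd p /\
     forall v, fst q <= v <= snd q -> ~ P n v}).
  { intros n p. apply constructive_indefinite_description.
    destruct (classic (good p)) as [Hp | Hp]; [| exists p; tauto].
    destruct Hp as [Hp1 Hp2].
    destruct (avoid_subinterval (P n) (fst p) (snd p)) as [a' [b' Hq]].
    - lra.
    - intros u Hu. apply Hopen. lra.
    - intro Hall. apply Hno. exists n, (fst p), (snd p). auto.
    - exists (a', b'). intros _. unfold good; simpl.
      destruct Hq as [Hq1 [Hq2 Hq3]]. repeat split; auto; lra. }
  pose (I := fix I (n : nat) : R * R :=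
         match n with O => (c, d) | S k => proj1_sig (Hstep k (I k)) end).
  assert (Hgood : forall n, good (I n)).
  { induction n as [|n IH]; [unfold good; simpl; lra|].
    apply (proj2_sig (Hstep n (I n)) IH). }
  assert (Hnext : forall n, fst (I n) <= fst (I (S n)) /\ snd (I (S n)) <= snd (I n)
             /\ forall v, fst (I (S n)) <= v <= snd (I (S n)) -> ~ P n v).
  { intro n. apply (proj2_sig (Hstep n (I n)) (Hgood n)). }
  destruct (nested_intervals (fun n => fst (I n)) (fun n => snd (I n))) as [x Hx].
  - intro n. destruct (Hgood n). lra.
  - intro n. destruct (Hnext n). tauto.
  - destruct (Hcover x) as [n Hn].
    + destruct (Hx O). simpl in *. lra.
    + destruct (Hnext n) as [_ [_ Havoid]]. exact (Havoid x (Hx (S n)) Hn).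
Qed.

Lemma ratio_near_one (A B e : R) :
  0 < B -> Rabs (A - B) <= e * B -> Rabs (A / B - 1) <= e.
Proof.
  intros HB Hdiff. replace (A / B - 1) with ((A - B) * / B) by (field; lra).
  rewrite Rabs_mult, Rabs_inv, (Rabs_pos_eq B) by lra.
  apply (Rmult_le_compat_r (/ B)) in Hdiff; [|left; apply Rinv_0_lt_compat; lra].
  replace (e * B * / B) with e in Hdiff by (field; lra). exact Hdiff.
Qed.

Section MonotoneSlowVariation.
(* A positive nonincreasing function G on (0, +oo) is slowly varying as soon
   as G(mu t) / G(t) -> 1 for a single mu > 1: by iteration the same holds for
   every power of mu, by monotonicity for every lam >= 1, and by a change of
   variable for lam < 1. *)
Variable G : R -> R.
Hypothesis G_pos : forall t, 0 < t -> 0 < G t.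
Hypothesis G_decr : forall s t, 0 < s <= t -> G t <= G s.

Definition negligible_drop (mu : R) : Prop :=
  forall eps, 0 < eps -> eventually (fun t => G t - G (mu * t) <= eps * G t).

(* The drop over [t, mu^p t] is a sum of p drops over dilated blocks. *)
Lemma negligible_drop_pow (mu : R) (p : nat) :
  1 <= mu -> negligible_drop mu -> negligible_drop (mu ^ p).
Proof.
  intros Hmu Hdrop. induction p as [|p IH]; intros eps Heps.
  - exists 0. intros t Ht. simpl. rewrite Rmult_1_l.
    pose proof (G_pos t Ht). nra.
  - assert (Hhalf : 0 < eps / 2) by lra.
    apply (eventually_mono (fun t => (0 < t /\ G t - G (mu * t) <= eps / 2 * G t)
                                   /\ G (mu * t) - G (mu ^ p * (mu * t))
                                        <= eps / 2 * G (mu * t))).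
    + intros t [[Ht H1] H2]. simpl pow.
      replace (mu * mu ^ p * t) with (mu ^ p * (mu * t)) by ring.
      assert (G (mu * t) <= G t) by (apply G_decr; nra).
      pose proof (G_pos (mu * t) ltac:(nra)). nra.
    + apply eventually_and.
      * apply eventually_and; [apply eventually_gt | exact (Hdrop _ Hhalf)].
      * exact (eventually_dilate mu (fun s => G s - G (mu ^ p * s) <= eps / 2 * G s)
                 ltac:(lra) (IH _ Hhalf)).
Qed.

Lemma negligible_drop_le (lam mu : R) :
  1 <= lam <= mu -> negligible_drop mu -> negligible_drop lam.
Proof.
  intros Hlam Hdrop eps Heps.
  apply (eventually_mono (fun t => 0 < t /\ G t - G (mu * t) <= eps * G t)).
  - intros t [Ht H]. assert (G (mu * t) <= G (lam * t)) by (apply G_decr; nra). lra.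
  - apply eventually_and; [apply eventually_gt | exact (Hdrop _ Heps)].
Qed.

(* Every lam >= 1 is dominated by some power of mu > 1. *)
Lemma negligible_drop_all (mu : R) :
  1 < mu -> negligible_drop mu -> forall lam, 1 <= lam -> negligible_drop lam.
Proof.
  intros Hmu Hdrop lam Hlam.
  destruct (Pow_x_infinity mu ltac:(rewrite Rabs_pos_eq; lra) lam) as [p Hp].
  specialize (Hp p (le_n p)). rewrite Rabs_pos_eq in Hp by (apply pow_le; lra).
  apply (negligible_drop_le lam (mu ^ p)); [lra|].
  apply negligible_drop_pow; [lra | exact Hdrop].
Qed.

Lemma RV0_of_negligible_drop (mu : R) :
  1 < mu -> negligible_drop mu -> RV_infty 0 G.
Proof.
  intros Hmu Hdrop. split; [exists 0; exact G_pos|].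
  intros lam Hlam. rewrite (Rpower_O lam Hlam). intros eps Heps.
  destruct (Rle_lt_dec 1 lam) as [Hge | Hlt].
  - (* lam >= 1: G(lam t) lies between (1 - eps/2) G(t) and G(t). *)
    destruct (negligible_drop_all mu Hmu Hdrop lam Hge (eps / 2) ltac:(lra)) as [T HT].
    exists (Rmax T 0). intros t Ht.
    pose proof (Rmax_l T 0). pose proof (Rmax_r T 0).
    specialize (HT t ltac:(lra)).
    assert (G (lam * t) <= G t) by (apply G_decr; nra).
    apply Rle_lt_trans with (eps / 2); [|lra].
    apply ratio_near_one; [apply G_pos; lra|].
    rewrite Rabs_left1 by lra. lra.
  - (* lam < 1: apply the drop estimate for 1/lam at the point lam t. *)
    set (e := Rmin (eps / 4) (1 / 2)).
    assert (He : 0 < e /\ e <= eps / 4 /\ e <= 1 / 2).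
    { unfold e, Rmin; destruct Rle_dec; lra. }
    assert (Hinv : 1 <= / lam).
    { rewrite <- Rinv_1. apply Rinv_le_contravar; lra. }
    destruct (eventually_dilate lam _ Hlam
                (negligible_drop_all mu Hmu Hdrop (/ lam) Hinv e ltac:(lra)))
      as [T HT].
    exists (Rmax T 0). intros t Ht.
    pose proof (Rmax_l T 0). pose proof (Rmax_r T 0).
    specialize (HT t ltac:(lra)). cbv beta in HT.
    replace (/ lam * (lam * t)) with t in HT by (field; lra).
    assert (G t <= G (lam * t)) by (apply G_decr; nra).
    assert (0 < G t) by (apply G_pos; lra).
    apply Rle_lt_trans with (eps / 2); [|lra].
    apply ratio_near_one; [lra|].
    rewrite Rabs_pos_eq by lra. nra.
Qed.

End MonotoneSlowVariation.

Lemma continuity_pt_ball (g : R -> R) (x eps : R) :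
  continuity_pt g x -> 0 < eps ->
  exists d, 0 < d /\ forall y, Rabs (y - x) < d -> Rabs (g y - g x) < eps.
Proof.
  intros Hg Heps. destruct (Hg eps Heps) as [d [Hd Hball]].
  exists d. split; [exact Hd|]. intros y Hy.
  destruct (Req_dec y x) as [-> | Hne].
  - rewrite Rminus_diag, Rabs_R0. exact Heps.
  - apply Hball. split; [split; [exact I | congruence] | exact Hy].
Qed.

Lemma RV_minus1_dilation (h : R -> R) (lam : R) :
  RV_infty (-1) h -> 0 < lam ->
  eventually (fun t => h t / 2 <= lam * h (lam * t) <= 2 * h t).
Proof.
  intros [[x0 Hpos] Hlim] Hlam.
  assert (Hpow : Rpower lam (-1) = / lam).
  { replace (-1) with (- (1)) by ring. rewrite Rpower_Ropp, Rpower_1; auto. }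
  assert (Heps : 0 < / (2 * lam)) by (apply Rinv_0_lt_compat; lra).
  specialize (Hlim lam Hlam _ Heps). rewrite Hpow in Hlim.
  apply (eventually_mono (fun t => x0 < t /\
           Rabs (h (lam * t) / h t - / lam) < / (2 * lam))).
  - intros t [Ht Hclose]. apply Rabs_def2 in Hclose.
    pose proof (Hpos t Ht) as Hht.
    set (r := h (lam * t) / h t) in *.
    assert (Hr : h (lam * t) = r * h t) by (unfold r; field; lra).
    assert (Hlr : / 2 < lam * r < 3 / 2).
    { replace (/ (2 * lam)) with (/ 2 * / lam) in Hclose by (field; lra).
      assert (lam * / lam = 1) by (field; lra). nra. }
    rewrite Hr. nra.
  - apply eventually_and; [apply eventually_gt | exact Hlim].
Qed.

Section RVRate.
(* G is positive and decreasing with -G' = h, where h is continuous, positive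
   and in RV(-1); the derivative relation enters only through the two
   integrated (mean value) estimates [G_drop_ge] and [G_drop_le]. *)
Variables G h : R -> R.
Hypothesis G_pos : forall t, 0 < t -> 0 < G t.
Hypothesis h_pos : forall t, 0 < t -> 0 < h t.
Hypothesis h_cont : forall t, 0 < t -> continuity_pt h t.
Hypothesis h_RV : RV_infty (-1) h.
Hypothesis G_drop_ge : forall s1 s2 m, 0 < s1 <= s2 ->
  (forall s, s1 <= s <= s2 -> m <= h s) -> m * (s2 - s1) <= G s1 - G s2.
Hypothesis G_drop_le : forall s1 s2 M, 0 < s1 <= s2 ->
  (forall s, s1 <= s <= s2 -> h s <= M) -> G s1 - G s2 <= M * (s2 - s1).

(* Taking m = 0 in [G_drop_ge]: G is nonincreasing. *)
Lemma G_decr (s t : R) : 0 < s <= t -> G t <= G s.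
Proof.
  intros Hst. assert (H0 : 0 * (t - s) <= G s - G t).
  { apply G_drop_ge; [exact Hst|]. intros u Hu. left. apply h_pos. lra. }
  lra.
Qed.

(* Uniform convergence on a subinterval: by Baire's theorem (h is continuous)
   the pointwise bounds h(s)/4 <= h(u s) <= 2 h(s), valid for each u in [1,2]
   and large s, hold uniformly for u in some nondegenerate [a, b]. *)
Lemma uniform_band : exists N a b, 0 < N /\ 1 <= a < b /\
  forall u s, a <= u <= b -> N <= s -> h s / 4 <= h (u * s) <= 2 * h s.
Proof.
  destruct (baire_interval 1 2
    (fun n u => forall s, INR n + 1 <= s -> h s / 4 <= h (u * s) <= 2 * h s))
    as [n [a [b [Hab [_ Hband]]]]].
  - lra.
  - intros u Hu. destruct (RV_minus1_dilation h u h_RV ltac:(lra)) as [T HT].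
    destruct (INR_unbounded T) as [n Hn]. exists n. intros s Hs.
    pose proof (pos_INR n).
    specialize (HT s ltac:(lra)).
    pose proof (h_pos s ltac:(lra)). pose proof (h_pos (u * s) ltac:(nra)).
    split; nra.
  - intros n u Hu Hnot.
    destruct (not_all_ex_not _ _ Hnot) as [s Hs].
    destruct (imply_to_and _ _ Hs) as [Hs1 Hs2].
    assert (Hs0 : 0 < s) by (pose proof (pos_INR n); lra).
    set (gap := Rmax (h s / 4 - h (u * s)) (h (u * s) - 2 * h s)).
    assert (Hgap : 0 < gap).
    { unfold gap, Rmax. destruct Rle_dec; apply Rnot_le_lt; intro; apply Hs2; split; lra. }
    destruct (continuity_pt_ball h (u * s) gap (h_cont (u * s) ltac:(nra)) Hgap)
      as [d [Hd Hball]].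
    exists (d / s). split; [apply Rdiv_lt_0_compat; lra|].
    intros v Hv Hbandv. specialize (Hbandv s Hs1).
    assert (Hvs : Rabs (v * s - u * s) < d).
    { rewrite <- Rmult_minus_distr_r, Rabs_mult, (Rabs_pos_eq s) by lra.
      apply (Rmult_lt_compat_r s) in Hv; [|lra].
      replace (d / s * s) with d in Hv by (field; lra). exact Hv. }
    specialize (Hball _ Hvs). apply Rabs_def2 in Hball.
    unfold gap, Rmax in Hball. destruct Rle_dec in Hball; lra.
  - exists (INR n + 1), a, b. pose proof (pos_INR n). repeat split; try lra.
    + apply Hband; auto.
    + apply Hband; auto.
Qed.

Section Band.
Variables N a b : R.
Hypothesis N_pos : 0 < N.
Hypothesis a_lt_b : 1 <= a < b.
Hypothesis band : forall u s, a <= u <= b -> N <= s ->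
  h s / 4 <= h (u * s) <= 2 * h s.

Lemma band_segment (s x : R) :
  N <= s -> a * s <= x <= b * s -> h s / 4 <= h x <= 2 * h s.
Proof.
  intros Hs Hx. replace x with (x / s * s) by (field; lra).
  apply band; [|exact Hs]. split.
  - apply (Rmult_le_reg_r s); [lra|]. replace (x / s * s) with x by (field; lra). lra.
  - apply (Rmult_le_reg_r s); [lra|]. replace (x / s * s) with x by (field; lra). lra.
Qed.

Lemma block_lower (s : R) : N <= s -> (b - a) / 4 * (s * h s) <= G s - G (b * s).
Proof.
  intros Hs.
  assert (Hdrop : h s / 4 * (b * s - a * s) <= G (a * s) - G (b * s)).
  { apply G_drop_ge; [nra|]. intros x Hx. apply (band_segment s x Hs Hx). }
  assert (G (a * s) <= G s) by (apply G_decr; nra).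
  nra.
Qed.

Lemma block_upper (s : R) : N <= s -> G (a * s) - G (b * s) <= 2 * (b - a) * (s * h s).
Proof.
  intros Hs.
  assert (Hdrop : G (a * s) - G (b * s) <= 2 * h s * (b * s - a * s)).
  { apply G_drop_le; [nra|]. intros x Hx. apply (band_segment s x Hs Hx). }
  nra.
Qed.

(* t h(t) = o(G t): the m blocks [b^j t, b^(j+1) t], j < m, each contribute
   at least (b - a)/8 t h(t) to G(t) for large t, since h is in RV(-1). *)
Lemma rate_negligible (eps : R) :
  0 < eps -> eventually (fun t => t * h t <= eps * G t).
Proof.
  intros Heps. set (c := (b - a) / 8). assert (Hc : 0 < c) by (unfold c; lra).
  assert (Hblocks : forall m, eventually (fun t => 0 < t /\
            INR m * c * (t * h t) <= G t - G (b ^ m * t))).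
  { induction m as [|m IH].
    - apply (eventually_mono (fun t => 0 < t)); [|apply eventually_gt].
      intros t Ht. simpl. rewrite Rmult_1_l. lra.
    - assert (Hbm : 1 <= b ^ m) by (apply pow_R1_Rle; lra).
      apply (eventually_mono (fun t =>
              (0 < t /\ INR m * c * (t * h t) <= G t - G (b ^ m * t)) /\
              N < b ^ m * t /\ h t / 2 <= b ^ m * h (b ^ m * t) <= 2 * h t)).
      + intros t [[Ht IHt] [HN Hdil]]. split; [exact Ht|].
        pose proof (block_lower (b ^ m * t) ltac:(lra)) as Hblock.
        rewrite S_INR. simpl pow. replace (b * b ^ m * t) with (b * (b ^ m * t)) by ring.
        assert (c * (t * h t) <= (b - a) / 4 * (b ^ m * t * h (b ^ m * t))).
        { assert (Hprod : t * (h t / 2) <= t * (b ^ m * h (b ^ m * t)))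
            by (apply Rmult_le_compat_l; lra).
          unfold c. replace (b ^ m * t * h (b ^ m * t)) with (t * (b ^ m * h (b ^ m * t)))
            by ring.
          apply Rle_trans with ((b - a) / 4 * (t * (h t / 2))); [lra|].
          apply Rmult_le_compat_l; lra. }
        nra.
      + apply eventually_and; [exact IH|]. apply eventually_and.
        * exact (eventually_dilate (b ^ m) (fun s => N < s) ltac:(lra) (eventually_gt N)).
        * apply RV_minus1_dilation; [exact h_RV | lra]. }
  destruct (INR_unbounded (/ (c * eps))) as [m Hm].
  assert (Hmce : 1 < INR m * c * eps).
  { apply (Rmult_lt_compat_l (c * eps)) in Hm; [|nra].
    rewrite Rinv_r in Hm by nra. nra. }
  refine (eventually_mono _ _ _ (Hblocks m)).
  intros t [Ht Hm_t].
  assert (Hbm : 0 < b ^ m * t) by (pose proof (pow_R1_Rle b m ltac:(lra)); nra).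
  pose proof (G_pos _ Hbm).
  assert (HX : 0 < t * h t) by (apply Rmult_lt_0_compat; [lra | apply h_pos; lra]).
  pose proof (Rmult_lt_compat_r _ _ _ HX Hmce) as Hgrow. rewrite Rmult_1_l in Hgrow.
  assert (eps * (INR m * c * (t * h t)) <= eps * G t) by (apply Rmult_le_compat_l; lra).
  replace (INR m * c * eps * (t * h t)) with (eps * (INR m * c * (t * h t))) in Hgrow
    by ring.
  lra.
Qed.

(* Hence G(t) - G(t b / a) = O(t h(t)) = o(G t). *)
Lemma band_negligible_drop : negligible_drop G (b / a).
Proof.
  intros eps Heps. set (K := 4 * (b - a)). assert (HK : 0 < K) by (unfold K; lra).
  assert (Ha : 0 < / a) by (apply Rinv_0_lt_compat; lra).
  apply (eventually_mono (fun t => (0 < t /\ N < / a * t) /\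
           (h t / 2 <= / a * h (/ a * t) <= 2 * h t) /\ t * h t <= eps / K * G t)).
  - intros t [[Ht HN] [Hdil Hrate]].
    pose proof (block_upper (/ a * t) ltac:(lra)) as Hblock.
    replace (a * (/ a * t)) with t in Hblock by (field; lra).
    replace (b * (/ a * t)) with (b / a * t) in Hblock by (field; lra).
    assert (Hprod : t * (/ a * h (/ a * t)) <= t * (2 * h t))
      by (apply Rmult_le_compat_l; lra).
    replace (/ a * t * h (/ a * t)) with (t * (/ a * h (/ a * t))) in Hblock by ring.
    assert (Hscaled : K * (t * h t) <= K * (eps / K * G t))
      by (apply Rmult_le_compat_l; lra).
    replace (K * (eps / K * G t)) with (eps * G t) in Hscaled by (field; lra).
    unfold K in Hscaled. nra.
  - apply eventually_and; [apply eventually_and|apply eventually_and].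
    + apply eventually_gt.
    + exact (eventually_dilate (/ a) (fun s => N < s) Ha (eventually_gt N)).
    + apply RV_minus1_dilation; [exact h_RV | exact Ha].
    + apply rate_negligible. apply Rdiv_lt_0_compat; lra.
Qed.

End Band.

Theorem RV0_of_RV_minus1_rate : RV_infty 0 G.
Proof.
  destruct uniform_band as [N [a [b [HN [Hab Hband]]]]].
  apply (RV0_of_negligible_drop G G_pos G_decr (b / a)).
  - apply (Rmult_lt_reg_r a); [lra|]. replace (b / a * a) with b by (field; lra). lra.
  - exact (band_negligible_drop N a b HN Hab Hband).
Qed.

End RVRate.

Lemma continuity_pt_of_lipschitz (g : R -> R) (x r K : R) :
  0 < r -> 0 < K ->
  (forall y, Rabs (y - x) < r -> Rabs (g y - g x) <= K * Rabs (y - x)) ->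
  continuity_pt g x.
Proof.
  intros Hr HK Hlip eps Heps.
  exists (Rmin r (eps / K)). split.
  - apply Rmin_pos; [lra | apply Rdiv_lt_0_compat; lra].
  - intros y [_ Hy]. simpl in *. unfold R_dist in *.
    pose proof (Rmin_l r (eps / K)). pose proof (Rmin_r r (eps / K)).
    apply Rle_lt_trans with (K * Rabs (y - x)); [apply Hlip; lra|].
    apply (Rmult_lt_compat_l K) in Hy; [|lra].
    apply Rlt_le_trans with (K * Rmin r (eps / K)); [exact Hy|].
    apply Rle_trans with (K * (eps / K)); [apply Rmult_le_compat_l; lra|].
    right. field. lra.
Qed.

Section PrimitiveOfReciprocal.
Variables f F : R -> R.
Hypothesis f_pos : forall x, 0 < x -> 0 < f x.
Hypothesis f_cont : forall x, 0 < x -> continuity_pt f x.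
Hypothesis F_def : forall x (pr : Riemann_integrable (fun u => / f u) x 1),
  0 < x -> F x = RiemannInt pr.

Lemma recip_integrable (p q : R) :
  0 < p -> 0 < q -> Riemann_integrable (fun u => / f u) p q.
Proof.
  intros Hp Hq.
  assert (Hcont : forall x, 0 < x -> continuity_pt (fun u => / f u) x).
  { intros x Hx. apply continuity_pt_inv; [apply f_cont; exact Hx|].
    apply Rgt_not_eq, f_pos, Hx. }
  destruct (Rle_dec p q).
  - apply continuity_implies_RiemannInt; [lra|]. intros x Hx. apply Hcont. lra.
  - apply RiemannInt_P1, continuity_implies_RiemannInt; [lra|].
    intros x Hx. apply Hcont. lra.
Qed.

Lemma F_sub (x y : R) (Hx : 0 < x) (Hy : 0 < y) :
  F x - F y = RiemannInt (recip_integrable x y Hx Hy).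
Proof.
  rewrite (F_def x (recip_integrable x 1 Hx Rlt_0_1) Hx),
          (F_def y (recip_integrable y 1 Hy Rlt_0_1) Hy),
          <- (RiemannInt_P26 (recip_integrable x y Hx Hy)
                (recip_integrable y 1 Hy Rlt_0_1) (recip_integrable x 1 Hx Rlt_0_1)).
  ring.
Qed.

Lemma F_sub_le (x y m : R) : 0 < x <= y -> 0 < m ->
  (forall z, x <= z <= y -> m <= f z) -> F x - F y <= (y - x) / m.
Proof.
  intros Hxy Hm Hf. rewrite (F_sub x y ltac:(lra) ltac:(lra)).
  apply Rle_trans with (RiemannInt (RiemannInt_P14 x y (/ m))).
  - apply RiemannInt_P19; [lra|]. intros z Hz. unfold fct_cte.
    apply Rinv_le_contravar; [lra | apply Hf; lra].
  - rewrite RiemannInt_P15. unfold Rdiv. lra.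
Qed.

Lemma F_sub_ge (x y M : R) : 0 < x <= y ->
  (forall z, x <= z <= y -> f z <= M) -> (y - x) / M <= F x - F y.
Proof.
  intros Hxy Hf.
  assert (HM : 0 < M) by (pose proof (Hf x ltac:(lra)); pose proof (f_pos x ltac:(lra)); lra).
  rewrite (F_sub x y ltac:(lra) ltac:(lra)).
  apply Rle_trans with (RiemannInt (RiemannInt_P14 x y (/ M))).
  - rewrite RiemannInt_P15. unfold Rdiv. lra.
  - apply RiemannInt_P19; [lra|]. intros z Hz. unfold fct_cte.
    apply Rinv_le_contravar; [apply f_pos; lra | apply Hf; lra].
Qed.

Lemma F_strict_decr (x y : R) : 0 < x < y -> F y < F x.
Proof.
  intros Hxy.
  destruct (continuity_ab_maj f x y ltac:(lra) (fun z Hz => f_cont z ltac:(lra)))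
    as [zmax [Hmax Hzmax]].
  pose proof (F_sub_ge x y (f zmax) ltac:(lra) Hmax).
  assert (0 < (y - x) / f zmax) by (apply Rdiv_lt_0_compat; [lra | apply f_pos; lra]).
  lra.
Qed.

Section Inverse.
Variable Finv : R -> R.
Hypothesis Finv_inv : forall t, 0 <= t -> 0 < Finv t /\ F (Finv t) = t.

Lemma Finv_decr (s t : R) : 0 <= s <= t -> Finv t <= Finv s.
Proof.
  intros Hst. destruct (Finv_inv s ltac:(lra)) as [Hs Hs'].
  destruct (Finv_inv t ltac:(lra)) as [Ht Ht'].
  destruct (Rle_lt_dec (Finv t) (Finv s)) as [|Hlt]; [assumption|].
  pose proof (F_strict_decr _ _ (conj Hs Hlt)). lra.
Qed.

Lemma Finv_segment (s1 s2 z : R) : 0 < s1 <= s2 -> Finv s2 <= z <= Finv s1 ->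
  s1 <= F z <= s2 /\ Finv (F z) = z.
Proof.
  intros Hs Hz.
  destruct (Finv_inv s1 ltac:(lra)) as [H1 H1'].
  destruct (Finv_inv s2 ltac:(lra)) as [H2 H2'].
  assert (Hmono : forall x y, 0 < x <= y -> F y <= F x).
  { intros x y Hxy. destruct (Req_dec x y) as [-> | Hne]; [lra|].
    left. apply F_strict_decr. lra. }
  assert (HFz : s1 <= F z <= s2).
  { split; [rewrite <- H1'; apply Hmono | rewrite <- H2'; apply Hmono]; lra. }
  split; [exact HFz|].
  destruct (Finv_inv (F z) ltac:(lra)) as [Hp Hp'].
  destruct (Rtotal_order (Finv (F z)) z) as [Hlt | [Heq | Hgt]]; [| exact Heq |].
  - pose proof (F_strict_decr _ _ (conj Hp Hlt)). lra.
  - assert (Hz0 : 0 < z) by lra.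
    pose proof (F_strict_decr _ _ (conj Hz0 Hgt)). lra.
Qed.

(* Integrated forms of (Finv)' = - f o Finv. *)
Lemma Finv_drop_ge (s1 s2 m : R) : 0 < s1 <= s2 ->
  (forall s, s1 <= s <= s2 -> m <= f (Finv s)) ->
  m * (s2 - s1) <= Finv s1 - Finv s2.
Proof.
  intros Hs Hm.
  pose proof (Finv_decr s1 s2 ltac:(lra)).
  destruct (Rle_lt_dec m 0) as [Hneg | Hpos]; [nra|].
  destruct (Finv_inv s1 ltac:(lra)) as [H1 H1'].
  destruct (Finv_inv s2 ltac:(lra)) as [H2 H2'].
  assert (Hdrop : F (Finv s2) - F (Finv s1) <= (Finv s1 - Finv s2) / m).
  { apply F_sub_le; [lra | exact Hpos|]. intros z Hz.
    destruct (Finv_segment s1 s2 z Hs Hz) as [HFz Hz'].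
    rewrite <- Hz'. apply Hm. exact HFz. }
  rewrite H1', H2' in Hdrop.
  apply (Rmult_le_compat_r m) in Hdrop; [|lra].
  replace ((Finv s1 - Finv s2) / m * m) with (Finv s1 - Finv s2) in Hdrop by (field; lra).
  lra.
Qed.

Lemma Finv_drop_le (s1 s2 M : R) : 0 < s1 <= s2 ->
  (forall s, s1 <= s <= s2 -> f (Finv s) <= M) ->
  Finv s1 - Finv s2 <= M * (s2 - s1).
Proof.
  intros Hs HM.
  destruct (Finv_inv s1 ltac:(lra)) as [H1 H1'].
  destruct (Finv_inv s2 ltac:(lra)) as [H2 H2'].
  assert (HMpos : 0 < M) by (pose proof (HM s1 ltac:(lra)); pose proof (f_pos _ H1); lra).
  assert (Hdrop : (Finv s1 - Finv s2) / M <= F (Finv s2) - F (Finv s1)).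
  { apply F_sub_ge; [pose proof (Finv_decr s1 s2 ltac:(lra)); lra|]. intros z Hz.
    destruct (Finv_segment s1 s2 z Hs Hz) as [HFz Hz'].
    rewrite <- Hz'. apply HM. exact HFz. }
  rewrite H1', H2' in Hdrop.
  apply (Rmult_le_compat_r M) in Hdrop; [|lra].
  replace ((Finv s1 - Finv s2) / M * M) with (Finv s1 - Finv s2) in Hdrop by (field; lra).
  lra.
Qed.

(* Finv is Lipschitz on [t0/2, 2 t0], with constant the maximum of f on
   [Finv (2 t0), Finv (t0/2)]; hence f o Finv is continuous. *)
Lemma rate_continuous (t0 : R) : 0 < t0 -> continuity_pt (fun t => f (Finv t)) t0.
Proof.
  intros Ht0.
  assert (Hrange : Finv (2 * t0) <= Finv (t0 / 2)) by (apply Finv_decr; lra).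
  assert (Hlow : 0 < Finv (2 * t0)) by (apply Finv_inv; lra).
  destruct (continuity_ab_maj f _ _ Hrange (fun z Hz => f_cont z ltac:(lra)))
    as [zmax [Hmax Hzmax]].
  set (K := f zmax). assert (HK : 0 < K) by (apply f_pos; lra).
  assert (Hlip : forall u v, t0 / 2 <= u <= v -> v <= 2 * t0 ->
                 Finv u - Finv v <= K * (v - u)).
  { intros u v Huv Hv. apply Finv_drop_le; [lra|]. intros s Hs. apply Hmax.
    split; apply Finv_decr; lra. }
  apply (continuity_pt_comp Finv f).
  - apply (continuity_pt_of_lipschitz Finv t0 (t0 / 2) K); [lra | exact HK|].
    intros y Hy. apply Rabs_def2 in Hy.
    destruct (Rle_lt_dec y t0) as [Hle | Hgt].
    + pose proof (Hlip y t0 ltac:(lra) ltac:(lra)).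
      pose proof (Finv_decr y t0 ltac:(lra)).
      rewrite Rabs_pos_eq, Rabs_left1 by lra. lra.
    + pose proof (Hlip t0 y ltac:(lra) ltac:(lra)).
      pose proof (Finv_decr t0 y ltac:(lra)).
      rewrite Rabs_left1, Rabs_pos_eq by lra. lra.
  - apply f_cont, Finv_inv. lra.
Qed.

End Inverse.
End PrimitiveOfReciprocal.

(* The hypothesis F_lim0 only guarantees that the inverse Finv exists; the
   argument uses Finv_inv directly. *)
Theorem mainTheorem8
  (f F Finv : R -> R)
  (f_pos : forall x, 0 < x -> 0 < f x)
  (f_cont : forall x, 0 < x -> continuity_pt f x)
  (F_def : forall x (pr : Riemann_integrable (fun u => / f u) x 1),
             0 < x -> F x = RiemannInt pr)
  (F_lim0 : forall M, exists d, 0 < d /\ forall x, 0 < x < d -> M < F x)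
  (Finv_inv : forall t, 0 <= t -> 0 < Finv t /\ F (Finv t) = t)
  (hRV : RV_infty (-1) (fun t => f (Finv t))) :
  RV_infty 0 Finv.
Proof.
  apply (RV0_of_RV_minus1_rate Finv (fun t => f (Finv t))).
  - intros t Ht. apply Finv_inv. lra.
  - intros t Ht. apply f_pos, Finv_inv. lra.
  - exact (rate_continuous f F f_pos f_cont F_def Finv Finv_inv).
  - exact hRV.
  - exact (Finv_drop_ge f F f_pos f_cont F_def Finv Finv_inv).
  - exact (Finv_drop_le f F f_pos f_cont F_def Finv Finv_inv).
Qed.
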